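(* Consider the corrupted Lipschitz contextual search problem with pricing loss described in the context, and let the learner run Algorithm 3 (described in the context) with discretization parameter $\eta_0=T^{-1/(d+1)}$ and agnostic-check schedule $\tau_0\ge 1$. Then for any unknown corruption budget $C$ (and every $L$-Lipschitz $f$, context sequence and adaptive corruption strategy with at most $C$ corrupted rounds), the total pricing loss is at most \[ L\cdot O\big(C\log T + T^{d/(d+1)}\log T + C\tau_0 + T/\tau_0\big). \] In particular, with $\tau_0=T^{1/(d+1)}$, the total pricing loss is at most $L\cdot \widetilde{O}\big(T^{d/(d+1)} + C\cdot T^{1/(d+1)}\big)$, where $\widetilde O$ hides logarithmic factors in $T$.
   Context: Problem. Fix $L>0$, $d\ge 1$, horizon $T\ge 2$. An adversary fixes an unknown $f:[0,1]^d\to[0,L]$ with $|f(x)-f(y)|\le L\|x-y\|_\infty$. In each round $t=1,\dots,T$: the adversary chooses $x_t\in[0,1]^d$; the learner observes $x_t$ and posts a guess (price) $q_t$; the adversary observes $q_t$ and sends $\sigma_t\in\{0,1\}$. With $\sigma(u)=1$ if $u>0$, $0$ if $u\le 0$: in uncorrupted rounds $\sigma_t=\sigma(q_t-f(x_t))$, in corrupted rounds $\sigma_t=1-\sigma(q_t-f(x_t))$; the adversary chooses adaptively (after seeing $q_t$) which rounds to corrupt, with at most $C$ corrupted rounds, $C$ unknown to the learner. The (unobserved) pricing loss of round $t$ is $\ell(q_t,f(x_t))=f(x_t)-q_t\cdot\mathbb{1}[q_t\le f(x_t)]$. $\mathtt{len}$ denotes length of an interval and side length of a hypercube. Subroutine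 $\mathtt{MidpointQuery}(I,Y)$, $Y=[a,b]$: guess $q=(a+b)/2$; if $\sigma_t=1$ return $Y\cap[0,q+L\,\mathtt{len}(I)]$, if $\sigma_t=0$ return $Y\cap[q-L\,\mathtt{len}(I),\infty)$. Algorithm 3. The learner uniformly partitions $[0,1]^d$ into hypercubes of side length $\Theta(\eta_0)$. Each hypercube $I_j$ has an associated range $Y_j$ (initially $[0,L]$) and a counter $c_j$ (initially $0$). In round $t$, let $I_j$ be the hypercube containing $x_t$. If $\mathtt{len}(Y_j)<10L\eta_0$ ($I_j$ is ''pricing-ready''): set $c_j:=c_j+1$; if $c_j>\tau_0$, guess $\max(Y_j)$ (a ''checking round'') and set $c_j:=0$; otherwise guess $\min(Y_j)$ (a ''pricing round''). The learner is ''surprised'' if in a checking round it receives $\sigma_t=0$ or in a pricing round it receives $\sigma_t=1$; when surprised it sets $Y_j:=[0,L]$ and $c_j:=0$. If $I_j$ is not pricing-ready, it performs a ''searching round'' $Y_j:=\mathtt{MidpointQuery}(I_j,Y_j)$. *)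

From HB Require Import structures.
From mathcomp Require Import all_boot all_order all_algebra.
From mathcomp Require Import reals exp.
Set Implicit Arguments. Unset Strict Implicit. Unset Printing Implicit Defensive.
Import Order.TTheory GRing.Theory Num.Theory.
Local Open Scope ring_scope.

Definition incube (R : realType) (d : nat) (x : 'I_d -> R) : Prop :=
  forall i, 0 <= x i <= 1.

Definition linf (R : realType) (d : nat) (x y : 'I_d -> R) : R :=
  \big[Num.max/0]_(i < d) `|x i - y i|.

Definition valid_f (R : realType) (d : nat) (L : R) (f : ('I_d -> R) -> R) : Prop :=
  (forall x, incube x -> 0 <= f x <= L) /\
  (forall x y, incube x -> incube y -> `|f x - f y| <= L * linf x y).

Definition sigma (R : realType) (u : R) : bool := 0 < u.

Definition pricing_loss (R : realType) (q v : R) : R :=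
  v - q * (if q <= v then 1 else 0).

Definition eta0 (R : realType) (d T : nat) : R :=
  (T%:R : R) `^ (- ((d.+1)%:R)^-1).

(** Number of cells per axis: N = floor(1/eta0) = floor(T^(1/(d+1))) (>= 1 for T >= 2),
    so that the cubes have side length 1/N in [eta0, 2 eta0) = Theta(eta0). *)
Definition ncells (R : realType) (d T : nat) : nat :=
  Num.truncn ((T%:R : R) `^ ((d.+1)%:R^-1)).

(** The index (as a list of d coordinates in {0,..,N-1}) of the hypercube
    [k_1/N,(k_1+1)/N) x ... containing x (the last cube along each axis is closed). *)
Definition cell_of (R : realType) (d N : nat) (x : 'I_d -> R) : seq nat :=
  [seq minn N.-1 (Num.truncn (x i * N%:R)) | i <- enum 'I_d].

(** Per-cube learner state: range Y_j = [a, b] and counter c_j. *)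
Definition cell_state (R : realType) : Type := (R * R * nat)%type.
Definition lstate (R : realType) : Type := seq nat -> cell_state R.

Definition init_cell (R : realType) (L : R) : cell_state R := (0, L, 0%N).
Definition init_state (R : realType) (L : R) : lstate R := fun _ => init_cell L.

Record alg_params (R : realType) := AlgParams {
  ap_L : R;
  ap_eta : R;
  ap_N : nat;    (* number of cubes per axis *)
  ap_tau : R
}.

Definition side (R : realType) (N : nat) : R := (N%:R)^-1.

Definition ready (R : realType) (P : alg_params R) (a b : R) : bool :=
  b - a < 10 * ap_L P * ap_eta P.

Definition alg_price (R : realType) (d : nat) (P : alg_params R) (S : lstate R)
    (x : 'I_d -> R) : R :=
  let: (a, b, c) := S (cell_of (ap_N P) x) in
  if ready P a b then
    (if ap_tau P < (c.+1)%:R then b  (* checking round: guess max Y_j *)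
     else a)                          (* pricing round: guess min Y_j *)
  else (a + b) / 2.                   (* searching round: MidpointQuery *)

Definition alg_update_cell (R : realType) (P : alg_params R) (cs : cell_state R)
    (sig : bool) : cell_state R :=
  let: (a, b, c) := cs in
  let L := ap_L P in
  if ready P a b then
    (if ap_tau P < (c.+1)%:R then
       (* checking round: c_j := 0; surprised iff sig = 0 *)
       (if sig then (a, b, 0%N) else init_cell L)
     else
       (* pricing round: c_j := c_j + 1; surprised iff sig = 1 *)
       (if sig then init_cell L else (a, b, c.+1)))
  else
    (* searching round: Y_j := MidpointQuery(I_j, Y_j) *)
    let q := (a + b) / 2 in
    let s := side R (ap_N P) in
    if sig then (Num.max a 0, Num.min b (q + L * s), c)
    else (Num.max a (q - L * s), b, c).

Definition alg_update (R : realType) (d : nat) (P : alg_params R) (S : lstate R)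
    (x : 'I_d -> R) (sig : bool) : lstate R :=
  let j := cell_of (ap_N P) x in
  fun k => if k == j then alg_update_cell P (S j) sig else S k.

Definition hist (R : realType) (d : nat) : Type := ((('I_d -> R) * R) * bool)%type.

(** Adaptive adversary: chooses x_t from the history, and (after seeing q_t)
    whether to corrupt round t. *)
Record adversary (R : realType) (d : nat) := Adversary {
  adv_x : seq (hist R d) -> 'I_d -> R;
  adv_corrupt : seq (hist R d) -> ('I_d -> R) -> R -> bool
}.

Record game_rec (R : realType) (d : nat) := GameRec {
  g_state : lstate R;
  g_hist : seq (hist R d);
  g_loss : R;
  g_ncorr : nat
}.

Fixpoint run (R : realType) (d : nat) (P : alg_params R) (f : ('I_d -> R) -> R)
    (A : adversary R d) (t : nat) : game_rec R d :=
  match t with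
  | 0%N => GameRec (init_state (ap_L P)) [::] 0 0%N
  | t'.+1 =>
    let g := run P f A t' in
    let x := adv_x A (g_hist g) in
    let q := alg_price P (g_state g) x in
    let corr := adv_corrupt A (g_hist g) x q in
    let sig := if corr then ~~ sigma (q - f x) else sigma (q - f x) in
    GameRec (alg_update P (g_state g) x sig)
            (rcons (g_hist g) (x, q, sig))
            (g_loss g + pricing_loss q (f x))
            (g_ncorr g + corr)
  end.

Definition alg3 (R : realType) (d T : nat) (L tau0 : R) : alg_params R :=
  AlgParams L (eta0 R d T) (ncells R d T) tau0.

(* Amortized analysis with a potential on every cube.  While a cube searches, its
   potential is L (log2 (len Y / (L/N)) + 1): a midpoint query halves len Y up to
   the slack L/N by which f varies on the cube, and loses at most L.  While it
   prices, its potential is 3 c L / tau0, which pays the loss L of the next checking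
   round; a pricing round itself loses at most len Y + L/N = O(L eta0).  Penalties of
   order L log T + L tau0 are added while corruption keeps Y inconsistent with f; they
   pay for the losses until the learner is surprised and for the reset.  So an
   uncorrupted round increases loss + potential by O(L eta0 + L / tau0), a corrupted
   one by O(L log T + L tau0), and the initial potential is O(L log T) on each of the
   N^d <= T^(d/(d+1)) cubes. *)

From HB Require Import structures.
From mathcomp Require Import all_boot all_order all_algebra.
From mathcomp Require Import reals exp.
From mathcomp Require Import boolp ring lra zify.
Set Implicit Arguments. Unset Strict Implicit. Unset Printing Implicit Defensive.
Import Order.TTheory GRing.Theory Num.Theory.
Local Open Scope ring_scope.

Section CellGeometry.
Variables (R : realType) (d N : nat).
Hypothesis N_gt0 : (0 < N)%N.

Lemma side_gt0 : 0 < side R N.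
Proof. by rewrite invr_gt0 ltr0n. Qed.

Lemma nth_cell_of (x : 'I_d -> R) (i : 'I_d) :
  nth 0%N (cell_of N x) i = minn N.-1 (Num.truncn (x i * N%:R)).
Proof. by rewrite (nth_map i) -?enumT ?size_enum_ord // nth_ord_enum. Qed.

Lemma cell_index_bound (x : 'I_d -> R) i : 0 <= x i <= 1 ->
  (nth 0%N (cell_of N x) i)%:R <= x i * N%:R <= (nth 0%N (cell_of N x) i)%:R + 1.
Proof.
move=> /andP[x0 x1]; rewrite nth_cell_of.
have xN0 : 0 <= x i * N%:R by rewrite mulr_ge0.
have [t_le|t_gt] := leqP (Num.truncn (x i * N%:R)) N.-1.
  by have /andP[-> /ltW] := truncn_itv xN0; rewrite -natr1 => ->.
have N_le : N%:R <= x i * N%:R by move: t_gt; rewrite prednK // -truncn_ge_nat.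
have -> : x i * N%:R = N%:R by apply/eqP; rewrite eq_le ler_piMl.
by rewrite natr1 prednK // lexx andbT ler_nat leq_pred.
Qed.

Lemma same_cell_dist (x y : 'I_d -> R) i : incube x -> incube y ->
  cell_of N x = cell_of N y -> `|x i - y i| <= side R N.
Proof.
move=> hx hy exy.
have /andP[hx1 hx2] := cell_index_bound (hx i).
have /andP[hy1 hy2] := cell_index_bound (hy i).
rewrite exy in hx1 hx2.
have N_pos : 0 < N%:R :> R by rewrite ltr0n.
have h : `|x i * N%:R - y i * N%:R| <= 1 by rewrite ler_norml; lra.
by rewrite -mulrBl normrM (gtr0_norm N_pos) -ler_pdivlMr // div1r in h.
Qed.

Lemma same_cell_linf (x y : 'I_d -> R) : incube x -> incube y ->
  cell_of N x = cell_of N y -> linf x y <= side R N.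
Proof.
move=> hx hy exy; apply: (big_ind (fun v => v <= side R N)).
- exact: ltW side_gt0.
- by move=> a b ha hb; rewrite ge_max ha hb.
- by move=> i _; exact: same_cell_dist.
Qed.

Definition cell_key (g : {ffun 'I_d -> 'I_N}) : seq nat := [seq (g i : nat) | i <- enum 'I_d].

Lemma cell_key_inj : injective cell_key.
Proof.
move=> g1 g2 e; apply/ffunP => i; apply/val_inj.
have := congr1 (fun s => nth 0%N s i) e.
by rewrite !(nth_map i) -?enumT ?size_enum_ord // nth_ord_enum.
Qed.

Lemma cell_key_surj (x : 'I_d -> R) : exists g, cell_key g = cell_of N x.
Proof.
have lt_N t : (minn N.-1 t < N)%N by rewrite gtn_min prednK ?leqnn.
exists [ffun i => Ordinal (lt_N (Num.truncn (x i * N%:R)))].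
by apply: eq_map => i; rewrite ffunE.
Qed.

End CellGeometry.

Lemma same_cell_lipschitz (R : realType) d N (L : R) (f : ('I_d -> R) -> R) x y :
  (0 < N)%N -> valid_f L f -> incube x -> incube y -> cell_of N x = cell_of N y ->
  `|f x - f y| <= L * side R N.
Proof.
move=> N_gt0 [f_range f_lip] hx hy exy.
have /andP[fx0 fxL] := f_range x hx.
apply: le_trans (f_lip x y hx hy) _.
by rewrite ler_wpM2l ?(le_trans fx0 fxL) // same_cell_linf.
Qed.

Lemma ln2_gt0 (R : realType) : 0 < ln (2 : R).
Proof. by apply: ln_gt0; lra. Qed.

Section SearchDepth.
Variables (R : realType) (u : R).
Hypothesis u_gt0 : 0 < u.

(* log2 of the distance of [len] above [2 u], the fixed point of [len -> len / 2 + u],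
   measured in units of [u] (and truncated at [u]). *)
Definition search_depth (len : R) : R := ln (Num.max (len - 2 * u) u / u) / ln 2.

Let max_ge (x : R) : u <= Num.max (x - 2 * u) u.
Proof. by rewrite le_max lexx orbT. Qed.

Let max_div_gt0 (x : R) : 0 < Num.max (x - 2 * u) u / u.
Proof. by rewrite divr_gt0 // (lt_le_trans u_gt0). Qed.

Lemma search_depth_ge0 (len : R) : 0 <= search_depth len.
Proof.
rewrite divr_ge0 ?(ltW (ln2_gt0 R)) // ln_ge0 //.
by rewrite ler_pdivlMr // mul1r.
Qed.

Lemma le_search_depth (x y : R) : x <= y -> search_depth x <= search_depth y.
Proof.
move=> hxy; have u0 := u_gt0.
rewrite ler_pM2r ?invr_gt0 ?ln2_gt0 // ler_ln ?posrE //.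
rewrite ler_pM2r ?invr_gt0 // ge_max !le_max lexx !orbT andbT.
by apply/orP; left; lra.
Qed.

Lemma search_depth_halve (len len' : R) : 4 * u <= len -> len' <= len / 2 + u ->
  search_depth len' + 1 <= search_depth len.
Proof.
move=> hlen hlen'.
have u0 := u_gt0; have l2 := ln2_gt0 R.
rewrite /search_depth (@max_l _ _ (len - 2 * u)); last lra.
have half_gt0 : 0 < (len - 2 * u) / u / 2 by rewrite !divr_gt0 //; lra.
have : ln (Num.max (len' - 2 * u) u / u) <= ln ((len - 2 * u) / u / 2).
  rewrite ler_ln ?posrE // mulrAC ler_pM2r ?invr_gt0 // ge_max.
  by apply/andP; split; lra.
rewrite ln_div ?posrE //; last by rewrite divr_gt0 //; lra.
by move=> h; rewrite -(ler_pM2r l2) mulrDl !divfK ?gt_eqF // mul1r; lra.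
Qed.

Lemma search_depth_mul_le (n : R) : 1 <= n -> search_depth (n * u) <= ln n / ln 2.
Proof.
move=> n1; have u0 := u_gt0.
rewrite ler_pM2r ?invr_gt0 ?ln2_gt0 // ler_ln ?posrE //; last lra.
rewrite ler_pdivrMr // ge_max; apply/andP; split; nra.
Qed.

End SearchDepth.

Lemma pricing_lossE_gt (R : realType) (q v : R) : v < q -> pricing_loss q v = v.
Proof. by move=> h; rewrite /pricing_loss leNgt h mulr0 subr0. Qed.

Lemma pricing_lossE_le (R : realType) (q v : R) : q <= v -> pricing_loss q v = v - q.
Proof. by move=> h; rewrite /pricing_loss h mulr1. Qed.

Lemma pricing_loss_le (R : realType) (q v M : R) :
  0 <= q -> v <= M -> pricing_loss q v <= M.
Proof.
move=> q0 vM; case: (lerP q v) => h; last by rewrite pricing_lossE_gt.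
by rewrite pricing_lossE_le //; lra.
Qed.

Section Potential.
Variables (R : realType) (d : nat) (L eta tau0 : R) (N : nat) (f : ('I_d -> R) -> R).
Hypotheses (L_gt0 : 0 < L) (eta_gt0 : 0 < eta) (N_gt0 : (0 < N)%N)
  (side_le : side R N <= 2 * eta) (tau0_ge1 : 1 <= tau0) (f_valid : valid_f L f).

Let P := AlgParams L eta N tau0.
Let osc := L * side R N.

Lemma osc_gt0 : 0 < osc.
Proof. exact: mulr_gt0 L_gt0 (side_gt0 R N_gt0). Qed.

Lemma osc_le : osc <= 2 * (L * eta).
Proof. by rewrite mulrCA ler_pM2l. Qed.

Lemma readyE a b : ready P a b = (b - a < 10 * (L * eta)).
Proof. by rewrite /ready /= mulrA. Qed.

Lemma L_div_tau0_gt0 : 0 < L / tau0.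
Proof. by rewrite divr_gt0 // (lt_le_trans ltr01 tau0_ge1). Qed.

Lemma tau0_mul_L_div_tau0 : tau0 * (L / tau0) = L.
Proof. by rewrite mulrCA divff ?mulr1 // gt_eqF // (lt_le_trans ltr01 tau0_ge1). Qed.

Lemma L_mul_tau0_sub_ge0 (c : nat) : c%:R <= tau0 -> 0 <= L * (tau0 - c%:R).
Proof. by move=> hc; apply: mulr_ge0; [exact: ltW | rewrite subr_ge0]. Qed.

Definition in_cell (k : seq nat) (y : 'I_d -> R) := incube y /\ cell_of N y = k.

Lemma f_in_cell_range k y : in_cell k y -> 0 <= f y <= L.
Proof. by case=> hy _; exact: f_valid.1. Qed.

Lemma in_cell_osc k x y : in_cell k x -> in_cell k y -> f x - osc <= f y <= f x + osc.
Proof.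
move=> [hx ex] [hy ey].
have := same_cell_lipschitz N_gt0 f_valid hx hy; rewrite ex ey => /(_ erefl).
by rewrite -/osc ler_norml => /andP[h1 h2]; apply/andP; split; lra.
Qed.

Definition lower_valid k a := forall y, in_cell k y -> a <= f y.
Definition upper_valid k b := forall y, in_cell k y -> f y < b + osc.
Definition upper_strict k b := forall y, in_cell k y -> f y < b.
Definition near_top k := forall y, in_cell k y -> L - osc <= f y.

Lemma near_top_or_upper_strict k : near_top k \/ upper_strict k L.
Proof.
case: (pselect (upper_strict k L)) => [|not_strict]; [by right | left].
move=> y hy; rewrite leNgt; apply/negP => fy_lt; apply: not_strict => y' hy'.
by have /andP[_ ?] := in_cell_osc hy hy'; lra.
Qed.

Definition reset_cost := L * (search_depth osc L + 3).

(* If f >= L - L/N on the whole cube, the initial bound [b = L] need not be strict and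
   every query raises [a]; the loss [f - q <= (L - a) / 2] is then paid by [2 (L - a)]. *)
Definition search_potential k a b :=
  if `[< near_top k >] && (b == L) then 2 * (L - a)
  else L * (search_depth osc (b - a) + 1).

(* Each invariant that uncorrupted rounds preserve is charged while it is broken,
   enough to pay for the reset it eventually causes; a too low [b] also pays [L] for
   each pricing round left before the next checking round. *)
Definition penalty k a b (c : nat) :=
  (if `[< lower_valid k a >] then 0 else L + reset_cost)
  + (if `[< upper_valid k b >] then 0 else L * (tau0 - c%:R) + L + reset_cost)
  + (if `[< near_top k >] || `[< upper_strict k b >] then 0 else L + reset_cost).

Definition cell_potential k (cs : cell_state R) :=
  let: (a, b, c) := cs in
  (if ready P a b then 3 * c%:R * (L / tau0) else search_potential k a b)
  + penalty k a b c.

Definition cell_inv (cs : cell_state R) :=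
  let: (a, b, c) := cs in
  [/\ 0 <= a <= L, 0 <= b <= L, c%:R <= tau0 & (~~ ready P a b -> c = 0%N)].

Definition round_cost := 12 * (L * eta) + 3 * (L / tau0).
Definition corruption_cost := 7 * L + 4 * reset_cost + L * tau0.

Lemma reset_cost_ge :
  [/\ 0 <= reset_cost, 2 * L <= reset_cost & L * (search_depth osc L + 1) <= reset_cost].
Proof.
have := search_depth_ge0 osc_gt0 L; rewrite /reset_cost => h.
split; last by rewrite ler_pM2l //; lra.
- by rewrite mulr_ge0 ?ltW //; lra.
- by rewrite mulrC ler_pM2l //; lra.
Qed.

Lemma penalty_bounds k a b (c : nat) : c%:R <= tau0 ->
  0 <= penalty k a b c <= 3 * (L + reset_cost) + L * tau0.
Proof.
move=> hc; have [r0 _ _] := reset_cost_ge; have L0 := L_gt0.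
have ? := L_mul_tau0_sub_ge0 hc.
have ? : L * (tau0 - c%:R) <= L * tau0 by rewrite ler_pM2l // lerBlDr lerDl.
by rewrite /penalty; case: ifP; case: ifP; case: ifP => _ _ _; apply/andP; split; lra.
Qed.

Lemma penalty_init k : penalty k 0 L 0 = 0.
Proof.
have L0 := L_gt0; have o0 := osc_gt0.
have low : lower_valid k 0 by move=> y /f_in_cell_range /andP[].
have up : upper_valid k L by move=> y /f_in_cell_range /andP[_ ?]; lra.
rewrite /penalty (asboolT low) (asboolT up).
by case: (near_top_or_upper_strict k) => h; rewrite (asboolT h) ?orbT /= !addr0.
Qed.

Lemma penalty_counter k a b (c c' : nat) : upper_valid k b ->
  penalty k a b c = penalty k a b c'.
Proof. by move=> hb; rewrite /penalty (asboolT hb). Qed.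

Lemma penalty_mono k a b a' b' (c : nat) : c%:R <= tau0 ->
  (lower_valid k a -> lower_valid k a') -> (upper_valid k b -> upper_valid k b') ->
  (upper_strict k b -> upper_strict k b') -> penalty k a' b' c <= penalty k a b c.
Proof.
move=> hc low up strict; have [r0 _ _] := reset_cost_ge; have L0 := L_gt0.
have ? := L_mul_tau0_sub_ge0 hc.
rewrite /penalty; apply: lerD; first apply: lerD.
- case: (asboolP (lower_valid k a)) => h; first by rewrite (asboolT (low h)).
  by case: ifP => _; lra.
- case: (asboolP (upper_valid k b)) => h; first by rewrite (asboolT (up h)).
  by case: ifP => _; lra.
- case: (asboolP (near_top k)) => //= _.
  case: (asboolP (upper_strict k b)) => h; first by rewrite (asboolT (strict h)).
  by case: ifP => _; lra.
Qed.

Lemma penalty_ge_lower k a b (c : nat) : c%:R <= tau0 -> ~ lower_valid k a ->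
  L + reset_cost <= penalty k a b c.
Proof.
move=> hc h; have [r0 _ _] := reset_cost_ge; have L0 := L_gt0.
have ? := L_mul_tau0_sub_ge0 hc.
by rewrite /penalty (asboolF h); case: ifP => _; case: ifP => _; lra.
Qed.

Lemma penalty_ge_strict k a b (c : nat) : c%:R <= tau0 -> ~ near_top k ->
  ~ upper_strict k b -> L + reset_cost <= penalty k a b c.
Proof.
move=> hc h h'; have [r0 _ _] := reset_cost_ge; have L0 := L_gt0.
have ? := L_mul_tau0_sub_ge0 hc.
by rewrite /penalty (asboolF h) (asboolF h') /=; case: ifP => _; case: ifP => _; lra.
Qed.

Lemma cell_potential_ready k a b c : ready P a b ->
  cell_potential k (a, b, c) = 3 * c%:R * (L / tau0) + penalty k a b c.
Proof. by move=> hr; rewrite /cell_potential hr. Qed.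

Lemma cell_potential_search k a b c : ~~ ready P a b ->
  cell_potential k (a, b, c) = search_potential k a b + penalty k a b c.
Proof. by move=> /negbTE hr; rewrite /cell_potential hr. Qed.

Lemma cell_potential_bounds k cs : cell_inv cs ->
  0 <= cell_potential k cs <= 6 * L + 4 * reset_cost + L * tau0.
Proof.
case: cs => [[a b] c] [/andP[a0 aL] /andP[b0 bL] hc _].
have /andP[p0 pB] := penalty_bounds k a b hc.
have [r0 r2 r1] := reset_cost_ge; have L0 := L_gt0; have t0 := L_div_tau0_gt0.
suff : 0 <= (if ready P a b then 3 * c%:R * (L / tau0) else search_potential k a b)
         <= 3 * L + reset_cost by move=> /andP[]; rewrite /cell_potential; lra.
case: ifP => _.
  have cr0 := mulr_ge0 (ler0n R c) (ltW t0).
  have crL : c%:R * (L / tau0) <= L by rewrite -[X in _ <= X]tau0_mul_L_div_tau0 ler_pM2r.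
  by apply/andP; split; lra.
rewrite /search_potential; case: ifP => _; first by apply/andP; split; lra.
have depth0 := search_depth_ge0 osc_gt0 (b - a).
have depth_le : search_depth osc (b - a) <= search_depth osc L.
  by apply: (le_search_depth osc_gt0); lra.
have pot0 := mulr_ge0 (ltW L0) (addr_ge0 depth0 ler01).
have pot_le : L * (search_depth osc (b - a) + 1) <= L * (search_depth osc L + 1).
  by rewrite ler_pM2l // lerD2r.
by apply/andP; split; lra.
Qed.

Lemma cell_potential_init k :
  cell_potential k (init_cell L) <= reset_cost
  /\ (near_top k -> cell_potential k (init_cell L) <= 2 * L).
Proof.
have [r0 r2 r1] := reset_cost_ge; have L0 := L_gt0.
rewrite /cell_potential /init_cell penalty_init addr0 mulr0n mulr0 mul0r.
case: ifP => _; first by split=> //; lra.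
rewrite /search_potential eqxx andbT subr0.
split; last by move=> top; rewrite (asboolT top).
by case: ifP => _; lra.
Qed.

Lemma cell_inv_init : cell_inv (init_cell L).
Proof. by have L0 := L_gt0; have t1 := tau0_ge1; split => //; try apply/andP; try split; lra. Qed.

Lemma cell_inv_update cs sig : cell_inv cs -> cell_inv (alg_update_cell P cs sig).
Proof.
case: cs => [[a b] c] [/andP[a0 aL] /andP[b0 bL] hc hc0].
have L0 := L_gt0; have o0 := osc_gt0; have t0 := le_trans ler01 tau0_ge1.
rewrite /alg_update_cell /=; case hr: (ready P a b).
  case: ifP => hchk; case: sig; try exact: cell_inv_init.
    by split; rewrite ?a0 ?aL ?b0 ?bL.
  by split; rewrite ?a0 ?aL ?b0 ?bL ?hr // leNgt hchk.
rewrite (hc0 (negbT hr)) -/osc; case: sig; split=> //.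
- by rewrite (max_l a0) a0 aL.
- by rewrite le_min b0 ge_min bL /=; lra.
- by rewrite le_max a0 ge_max aL /=; lra.
- by rewrite b0 bL.
Qed.

Lemma checking_step k x a b c : cell_inv (a, b, c) -> in_cell k x ->
  ready P a b -> tau0 < c.+1%:R ->
  pricing_loss b (f x) + cell_potential k (alg_update_cell P (a, b, c) (sigma (b - f x)))
  <= cell_potential k (a, b, c) + round_cost.
Proof.
move=> [_ /andP[b0 _] hc _] hx hr hchk.
have /andP[v0 vL] := f_in_cell_range hx.
have L0 := L_gt0; have Le0 := mulr_gt0 L_gt0 eta_gt0; have t0 := L_div_tau0_gt0.
have o0 := osc_gt0.
have c_cost : L < c%:R * (L / tau0) + L / tau0.
  have : tau0 * (L / tau0) < c.+1%:R * (L / tau0) by rewrite ltr_pM2r.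
  by rewrite tau0_mul_L_div_tau0 -natr1 mulrDl mul1r.
have cr0 := mulr_ge0 (ler0n R c) (ltW t0).
rewrite /alg_update_cell hr hchk [ap_L _]/= (cell_potential_ready _ _ hr) /round_cost /sigma.
case: (ltrP 0 (b - f x)) => hs.
  have hb : upper_valid k b.
    by move=> y hy; have /andP[_ ?] := in_cell_osc hx hy; lra.
  rewrite (cell_potential_ready _ _ hr) (penalty_counter a 0 c hb) mulr0n mulr0 mul0r.
  by rewrite pricing_lossE_gt; lra.
rewrite pricing_lossE_le; last lra.
have [init_le init_top] := cell_potential_init k.
have [top | not_top] := pselect (near_top k).
  by have := init_top top; have /andP[] := penalty_bounds k a b hc; lra.
have : L + reset_cost <= penalty k a b c.
  by apply: penalty_ge_strict => // strict; have := strict x hx; lra.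
lra.
Qed.

Lemma pricing_step k x a b c : cell_inv (a, b, c) -> in_cell k x ->
  ready P a b -> c.+1%:R <= tau0 ->
  pricing_loss a (f x) + cell_potential k (alg_update_cell P (a, b, c) (sigma (a - f x)))
  <= cell_potential k (a, b, c) + round_cost.
Proof.
move=> [/andP[a0 _] _ hc _] hx hr hc1.
have /andP[v0 vL] := f_in_cell_range hx.
have L0 := L_gt0; have Le0 := mulr_gt0 L_gt0 eta_gt0; have t0 := L_div_tau0_gt0.
have hchk : (tau0 < c.+1%:R) = false by rewrite ltNge hc1.
rewrite /alg_update_cell hr hchk [ap_L _]/= (cell_potential_ready _ _ hr) /round_cost /sigma.
case: (ltrP 0 (a - f x)) => hs.
  rewrite pricing_lossE_gt; last lra.
  have [init_le _] := cell_potential_init k.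
  have : L + reset_cost <= penalty k a b c.
    by apply: penalty_ge_lower => // low; have := low x hx; lra.
  have cr0 := mulr_ge0 (ler0n R c) (ltW t0).
  lra.
rewrite pricing_lossE_le; last lra.
rewrite !(cell_potential_ready _ _ hr) /penalty -natr1.
case: (asboolP (upper_valid k b)) => hb; last lra.
have := hb x hx; have := osc_le; rewrite readyE in hr; lra.
Qed.

Lemma cell_potential_halving k a b a' b' (loss : R) : b <= L -> ~~ ready P a b ->
  ~~ (`[< near_top k >] && (b == L)) -> b' <= b -> b' - a' <= (b - a) / 2 + osc ->
  penalty k a' b' 0 <= penalty k a b 0 -> loss <= L ->
  loss + cell_potential k (a', b', 0) <= cell_potential k (a, b, 0).
Proof.
move=> bL hr not_top hb' hlen hpen hloss.
have L0 := L_gt0; have o0 := osc_gt0; have o_le := osc_le.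
have depth0 := search_depth_ge0 osc_gt0 (b - a).
have not_top' : `[< near_top k >] && (b' == L) = false.
  apply: contraNF not_top => /andP[-> /eqP b'L] /=; apply/eqP; lra.
rewrite (cell_potential_search _ _ hr) /cell_potential /search_potential.
rewrite (negbTE not_top) not_top'; case: ifP => _.
  by have := mulr_ge0 (ltW L0) depth0; lra.
have : search_depth osc (b' - a') + 1 <= search_depth osc (b - a).
  by apply: search_depth_halve => //; move: hr; rewrite readyE; lra.
by rewrite -(ler_pM2l L0) => depth_le; lra.
Qed.

Lemma searching_step_top k x a : cell_inv (a, L, 0%N) -> in_cell k x ->
  ~~ ready P a L -> near_top k ->
  pricing_loss ((a + L) / 2) (f x)
  + cell_potential k (alg_update_cell P (a, L, 0%N) (sigma ((a + L) / 2 - f x)))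
  <= cell_potential k (a, L, 0%N).
Proof.
move=> [/andP[a0 aL] _ _ _] hx hr top; set q := (a + L) / 2.
have L0 := L_gt0; have o0 := osc_gt0; have o_le := osc_le.
have len : 10 * (L * eta) <= L - a by move: hr; rewrite readyE -leNgt.
have fx_top := top x hx; have /andP[_ vL] := f_in_cell_range hx.
have q_le : q <= f x by rewrite /q; lra.
have := pricing_lossE_le q_le; rewrite /sigma ltNge subr_le0 q_le.
rewrite /alg_update_cell (negbTE hr) -/osc => ->.
have hpen : penalty k (Num.max a (q - osc)) L 0 <= penalty k a L 0.
  apply: penalty_mono => //; first exact: le_trans ler01 tau0_ge1.
  by move=> low y hy; rewrite ge_max low //=; have := top y hy; rewrite /q; lra.
have ha' : q - osc <= Num.max a (q - osc) by rewrite le_max lexx orbT.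
rewrite (cell_potential_search _ _ hr) /search_potential (asboolT top) eqxx /=.
rewrite /cell_potential /search_potential (asboolT top) eqxx /=.
by case: ifP => _; rewrite ?mulr0n ?mulr0 ?mul0r /q in ha' *; lra.
Qed.

Lemma searching_step k x a b : cell_inv (a, b, 0%N) -> in_cell k x -> ~~ ready P a b ->
  pricing_loss ((a + b) / 2) (f x)
  + cell_potential k (alg_update_cell P (a, b, 0%N) (sigma ((a + b) / 2 - f x)))
  <= cell_potential k (a, b, 0%N) + round_cost.
Proof.
move=> inv_ab hx hr.
have round0 : 0 <= round_cost.
  by rewrite /round_cost; have := mulr_gt0 L_gt0 eta_gt0; have := L_div_tau0_gt0; lra.
have [/andP[/asboolP top /eqP bL] | not_top] := boolP (`[< near_top k >] && (b == L)).
  by subst b; have := searching_step_top inv_ab hx hr top; lra.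
set q := (a + b) / 2; have [/andP[a0 aL] /andP[b0 bL] _ _] := inv_ab.
have L0 := L_gt0; have o0 := osc_gt0; have o_le := osc_le.
have /andP[v0 vL] := f_in_cell_range hx.
have q0 : 0 <= q by rewrite /q; lra.
have hc0 : 0%:R <= tau0 := le_trans ler01 tau0_ge1.
have loss_le := pricing_loss_le q0 vL.
rewrite /alg_update_cell (negbTE hr) -/osc /sigma.
suff : pricing_loss q (f x) + cell_potential k (if 0 < q - f x
    then (Num.max a 0, Num.min b (q + osc), 0%N) else (Num.max a (q - osc), b, 0%N))
  <= cell_potential k (a, b, 0%N) by lra.
have osc_x y : in_cell k y -> f x - osc <= f y <= f x + osc by exact: in_cell_osc.
case: (ltrP 0 (q - f x)) => hs.
  rewrite (max_l a0).
  have hb' : Num.min b (q + osc) <= b by rewrite ge_min lexx.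
  have hlen : Num.min b (q + osc) - a <= (b - a) / 2 + osc.
    have : Num.min b (q + osc) <= q + osc by rewrite ge_min lexx orbT.
    by rewrite /q; lra.
  apply: (cell_potential_halving bL hr not_top hb' hlen _ loss_le).
  apply: penalty_mono => // [up | strict] y hy; have /andP[_ fy] := osc_x y hy.
    by rewrite -ltrBlDr lt_min !ltrBlDr up //=; lra.
  by rewrite lt_min strict //=; lra.
have ha' : q - osc <= Num.max a (q - osc) by rewrite le_max lexx orbT.
have hlen : b - Num.max a (q - osc) <= (b - a) / 2 + osc by rewrite /q in ha' *; lra.
apply: (cell_potential_halving bL hr not_top (lexx b) hlen _ loss_le).
apply: penalty_mono => // low y hy; have /andP[fy _] := osc_x y hy.
by rewrite ge_max low //=; lra.
Qed.

Definition cell_price (cs : cell_state R) :=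
  let: (a, b, c) := cs in
  if ready P a b then (if tau0 < c.+1%:R then b else a) else (a + b) / 2.

Lemma cell_price_ge0 cs : cell_inv cs -> 0 <= cell_price cs.
Proof.
case: cs => [[a b] c] [/andP[a0 _] /andP[b0 _] _ _] /=.
by case: ifP => _; [case: ifP | rewrite divr_ge0 ?addr_ge0].
Qed.

Lemma uncorrupted_step k x cs : cell_inv cs -> in_cell k x ->
  pricing_loss (cell_price cs) (f x)
  + cell_potential k (alg_update_cell P cs (sigma (cell_price cs - f x)))
  <= cell_potential k cs + round_cost.
Proof.
case: cs => [[a b] c] inv_abc hx; rewrite [cell_price _]/=.
case: ifP => hr; first case: ifP => hchk.
- exact: checking_step.
- by apply: pricing_step; rewrite // leNgt hchk.
- have [_ _ _ /(_ (negbT hr)) c0] := inv_abc; subst c.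
  exact: searching_step inv_abc hx (negbT hr).
Qed.

Lemma round_step k x cs sig (corr : bool) : cell_inv cs -> in_cell k x ->
  (~~ corr -> sig = sigma (cell_price cs - f x)) ->
  pricing_loss (cell_price cs) (f x) + cell_potential k (alg_update_cell P cs sig)
  <= cell_potential k cs + round_cost + (if corr then corruption_cost else 0).
Proof.
move=> inv_cs hx; case: corr => [_ | /(_ isT) ->]; last first.
  by rewrite addr0; exact: uncorrupted_step.
have /andP[_ new_le] := cell_potential_bounds k (cell_inv_update sig inv_cs).
have /andP[old_ge0 _] := cell_potential_bounds k inv_cs.
have /andP[_ vL] := f_in_cell_range hx.
have := pricing_loss_le (cell_price_ge0 inv_cs) vL.
have := mulr_gt0 L_gt0 eta_gt0; have := L_div_tau0_gt0.
by rewrite /round_cost /corruption_cost; lra.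
Qed.

Definition potential (S : lstate R) :=
  \sum_(g : {ffun 'I_d -> 'I_N}) cell_potential (cell_key g) (S (cell_key g)).

Lemma potential_update S (x : 'I_d -> R) sig :
  potential (alg_update P S x sig) = potential S - cell_potential (cell_of N x) (S (cell_of N x))
    + cell_potential (cell_of N x) (alg_update_cell P (S (cell_of N x)) sig).
Proof.
have [g0 g0_x] := cell_key_surj N_gt0 x; rewrite /potential.
rewrite (bigD1 g0) //= [in RHS](bigD1 g0) //= /alg_update -g0_x eqxx.
under eq_bigr => g /negbTE ne_g0 do rewrite (inj_eq (@cell_key_inj _ _)) ne_g0.
lra.
Qed.

Lemma alg_priceE S (x : 'I_d -> R) : alg_price P S x = cell_price (S (cell_of N x)).
Proof. by rewrite /alg_price; case: (S _) => [[a b] c]. Qed.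

Lemma run_potential_le (A : adversary R d) : (forall h, incube (adv_x A h)) -> forall t,
  let g := run P f A t in
  (forall k, cell_inv (g_state g k))
  /\ g_loss g + potential (g_state g)
     <= potential (init_state L) + t%:R * round_cost + (g_ncorr g)%:R * corruption_cost.
Proof.
move=> hA; elim=> [|t [IHinv IHle]] /=.
  by split=> [k|]; [exact: cell_inv_init | rewrite add0r !mul0r !addr0].
set g := run P f A t in IHinv IHle *; set S := g_state g in IHinv IHle *.
set x := adv_x A (g_hist g); set corr := adv_corrupt _ _ _ _.
set sig := if corr then _ else _.
split=> [k|]; first by rewrite /alg_update; case: eqP => _; [exact: cell_inv_update|].
have hx : in_cell (cell_of N x) x by split; [exact: hA|].
have hsig : ~~ corr -> sig = sigma (alg_price P S x - f x) by rewrite /sig => /negbTE ->.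
rewrite alg_priceE in hsig *.
have := round_step (IHinv (cell_of N x)) hx hsig.
rewrite potential_update natrD -natr1 !mulrDl mul1r.
by case: (corr) => /=; rewrite ?mul1r ?mul0r; lra.
Qed.

Lemma run_loss_le (A : adversary R d) (T C : nat) : (forall h, incube (adv_x A h)) ->
  (g_ncorr (run P f A T) <= C)%N ->
  g_loss (run P f A T) <= (N ^ d)%:R * reset_cost + T%:R * round_cost + C%:R * corruption_cost.
Proof.
move=> hA hC; have [hinv hle] := run_potential_le hA T.
have final_ge0 : 0 <= potential (g_state (run P f A T)).
  by apply: sumr_ge0 => g _; case/andP: (cell_potential_bounds (cell_key g) (hinv (cell_key g))).
have init_le : potential (init_state L) <= (N ^ d)%:R * reset_cost.
  have -> : (N ^ d)%:R * reset_cost = \sum_(g : {ffun 'I_d -> 'I_N}) reset_cost.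
    by rewrite sumr_const card_ffun !card_ord mulr_natl.
  by apply: ler_sum => g _; have [] := cell_potential_init (cell_key g).
have cost0 : 0 <= corruption_cost.
  have [r0 _ _] := reset_cost_ge; have := mulr_ge0 (ltW L_gt0) (le_trans ler01 tau0_ge1).
  by rewrite /corruption_cost; have := L_gt0; lra.
have : (g_ncorr (run P f A T))%:R * corruption_cost <= C%:R * corruption_cost.
  by rewrite ler_wpM2r // ler_nat.
lra.
Qed.

End Potential.

Section Discretization.
Variables (R : realType) (d T : nat).
Hypothesis T_ge2 : (2 <= T)%N.

Let y : R := T%:R `^ (d.+1%:R)^-1.
Let X : R := T%:R `^ (d%:R / d.+1%:R).
Let N := ncells R d T.

Let T_ge1 : 1 <= T%:R :> R.
Proof. by rewrite ler1n; lia. Qed.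

Lemma root_ge1 : 1 <= y.
Proof. by rewrite -(powRr0 T%:R) ler_powR // invr_ge0. Qed.

Lemma eta0E : eta0 R d T = y^-1.
Proof. exact: powRN. Qed.

Lemma root_expn : y ^+ d = X.
Proof. by rewrite -powR_mulrn ?powR_ge0 // -powRrM mulrC. Qed.

Lemma div_root : T%:R / y = X.
Proof.
have T_neq0 : T%:R != 0 :> R by rewrite pnatr_eq0; lia.
rewrite -{1}(powRr1 (ler0n _ T)) -powRB ?T_neq0 ?implybT //; congr (_ `^ _).
have : d.+1%:R != 0 :> R by rewrite pnatr_eq0.
by rewrite -natr1 => ?; field.
Qed.

Lemma ncells_gt0 : (0 < N)%N.
Proof. by rewrite truncn_gt0 root_ge1. Qed.

Lemma side_ncells_le : side R N <= 2 * eta0 R d T.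
Proof.
have y1 := root_ge1; have y_lt : y < N%:R + 1 by rewrite natr1 truncnS_gt.
have N1 : 1 <= N%:R :> R by rewrite ler1n ncells_gt0.
rewrite eta0E /side -invf_div lef_pV2 ?posrE ?divr_gt0 ?ltr0n ?ncells_gt0 //; lra.
Qed.

Lemma ncells_le : N%:R <= y.
Proof. by rewrite truncn_le (le_trans ler01 root_ge1). Qed.

Lemma ncells_expn_le : ((N ^ d)%N%:R : R) <= X.
Proof.
by rewrite natrX -root_expn lerXn2r ?nnegrE ?ler0n ?(le_trans ler01 root_ge1) ?ncells_le.
Qed.

Lemma ln_ncells_le : ln (N%:R : R) <= ln T%:R.
Proof.
have y_le : y <= T%:R by apply: ler1_powR => //; rewrite invf_le1 ?ler1n ?ltr0n.
by rewrite ler_ln ?posrE ?ltr0n ?ncells_gt0 ?(le_trans ncells_le) //; lia.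
Qed.

End Discretization.

Lemma reset_cost_le_log (R : realType) (L : R) N : 0 < L -> (0 < N)%N ->
  reset_cost L N <= L * (ln N%:R / ln 2 + 3).
Proof.
move=> L0 N0; have osc0 : 0 < L * side R N by rewrite mulr_gt0 ?side_gt0.
have L_eq : N%:R * (L * side R N) = L by rewrite mulrCA divff ?mulr1 // pnatr_eq0 -lt0n.
rewrite /reset_cost -[X in search_depth _ X]L_eq ler_pM2l // lerD2r.
by apply: search_depth_mul_le; rewrite // ler1n.
Qed.

Lemma alg3_loss_le (R : realType) d (L : R) T tau0 C f (A : adversary R d) :
  0 < L -> (2 <= T)%N -> 1 <= tau0 -> valid_f L f -> (forall h, incube (adv_x A h)) ->
  (g_ncorr (run (alg3 d T L tau0) f A T) <= C)%N ->
  g_loss (run (alg3 d T L tau0) f A T)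
  <= L * (16 * (ln T%:R / ln 2) * T%:R `^ (d%:R / d.+1%:R)
          + 23 * (ln T%:R / ln 2) * C%:R + C%:R * tau0 + 3 * (T%:R / tau0)).
Proof.
move=> L0 T2 tau1 f_valid hA hC; rewrite /alg3.
set rho := ln T%:R / ln 2; set X := T%:R `^ _.
have N0 := ncells_gt0 R d T2; have y1 := root_ge1 R d T2; have l2 := ln2_gt0 R.
have eta0_gt0 : 0 < eta0 R d T by rewrite eta0E invr_gt0 (lt_le_trans ltr01 y1).
have := run_loss_le L0 eta0_gt0 N0 (side_ncells_le R d T2) tau1 f_valid hA hC.
have -> : T%:R * round_cost L (eta0 R d T) tau0 = 12 * L * X + 3 * L * (T%:R / tau0).
  by rewrite /round_cost eta0E /X -(div_root R d T2); ring.
move=> run_le.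
have rho1 : 1 <= rho.
  by rewrite ler_pdivlMr // mul1r ler_ln ?posrE ?ltr0n ?ler_nat //; lia.
have reset_le : reset_cost L (ncells R d T) <= 4 * L * rho.
  apply: le_trans (reset_cost_le_log L0 N0) _.
  have : ln (ncells R d T)%:R / ln 2 <= rho by rewrite ler_pM2r ?invr_gt0 // ln_ncells_le.
  have -> : 4 * L * rho = L * (4 * rho) by ring.
  by rewrite ler_pM2l //; lra.
have [reset0 _ _] := reset_cost_ge L0 N0.
have cells_le := ler_pM (ler0n _ _) reset0 (ncells_expn_le R d T2) reset_le.
rewrite -/X in cells_le.
have corr_le : C%:R * corruption_cost L tau0 (ncells R d T)
    <= C%:R * (7 * L + 16 * L * rho + L * tau0).
  by apply: ler_wpM2l; rewrite ?ler0n // /corruption_cost; lra.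
have X0 : 0 <= X by exact: powR_ge0.
have LX : L * X <= L * rho * X by rewrite -mulrA ler_pM2l // ler_peMl.
have LC : L * C%:R <= L * rho * C%:R by rewrite -mulrA ler_pM2l // ler_peMl ?ler0n.
lra.
Qed.

Lemma loss_bound_le_general (R : realType) (rho X C K lT tau0 Tt : R) :
  1 <= rho -> 0 <= X -> 0 <= C -> 30 * rho <= K * lT -> 3 <= K -> 0 < tau0 -> 0 <= Tt ->
  16 * rho * X + 23 * rho * C + C * tau0 + 3 * (Tt / tau0)
  <= K * (C * lT + X * lT + C * tau0 + Tt / tau0).
Proof.
move=> rho1 X0 C0 K_lT K3 tau0_gt0 Tt0.
have rhoC := mulr_ge0 (le_trans ler01 rho1) C0.
have rhoX := mulr_ge0 (le_trans ler01 rho1) X0.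
have C_lT := ler_wpM2r C0 K_lT; have X_lT := ler_wpM2r X0 K_lT.
have K1 : 1 <= K by lra.
have C_tau0 := ler_wpM2r (mulr_ge0 C0 (ltW tau0_gt0)) K1.
have Tt_tau0 := ler_wpM2r (divr_ge0 Tt0 (ltW tau0_gt0)) K3.
rewrite mul1r in C_tau0; lra.
Qed.

Lemma loss_bound_le_tuned (R : realType) (rho X C K lT y : R) :
  1 <= rho -> 0 <= X -> 0 <= C -> 30 * rho <= K * lT -> 1 <= y ->
  16 * rho * X + 23 * rho * C + C * y + 3 * X <= K * lT * (X + C * y).
Proof.
move=> rho1 X0 C0 K_lT y1; have Cy0 : 0 <= C * y by rewrite mulr_ge0 // (le_trans ler01 y1).
have XCy_lT := ler_wpM2r (addr_ge0 X0 Cy0) K_lT.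
have rhoC : rho * C <= rho * (C * y) by rewrite ler_wpM2l ?(le_trans ler01) // ler_peMr.
have Cy : C * y <= rho * (C * y) by rewrite ler_peMl.
have rhoX : X <= rho * X by rewrite ler_peMl.
lra.
Qed.

Theorem theorem14 (R : realType) (d : nat) : (1 <= d)%N ->
  exists K : R, 0 < K /\
  forall (L : R) (T : nat) (tau0 : R) (C : nat)
         (f : ('I_d -> R) -> R) (A : adversary R d),
    0 < L -> (2 <= T)%N -> 1 <= tau0 ->
    valid_f L f ->
    (forall h, incube (adv_x A h)) ->
    (g_ncorr (run (alg3 d T L tau0) f A T) <= C)%N ->
    let loss := g_loss (run (alg3 d T L tau0) f A T) in
    let Tr : R := T%:R in
    loss <= L * K * (C%:R * ln Tr + Tr `^ (d%:R / (d.+1)%:R) * ln Tr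
                     + C%:R * tau0 + Tr / tau0)
    /\ (tau0 = Tr `^ ((d.+1)%:R^-1) ->
        loss <= L * K * ln Tr * (Tr `^ (d%:R / (d.+1)%:R)
                                 + C%:R * Tr `^ ((d.+1)%:R^-1))).
Proof.
(* The argument does not need [1 <= d]. *)
move=> _; have l2 := ln2_gt0 R.
exists (30 / ln 2 + 3); split; first by have := divr_gt0 (ltr_nat R 0 30) l2; lra.
move=> L T tau0 C f A L0 T2 tau1 f_valid hA hC loss Tr.
have := alg3_loss_le L0 T2 tau1 f_valid hA hC; rewrite -/loss -/Tr.
set rho := ln Tr / ln 2; set X := Tr `^ _ => loss_le.
have rho1 : 1 <= rho by rewrite ler_pdivlMr // mul1r ler_ln ?posrE ?ltr0n ?ler_nat //; lia.
have K_lT : 30 * rho <= (30 / ln 2 + 3) * ln Tr.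
  have lnT0 : 0 <= ln Tr by rewrite ln_ge0 // ler1n; lia.
  have -> : (30 / ln 2 + 3) * ln Tr = 30 * rho + 3 * ln Tr by rewrite /rho; ring.
  by rewrite lerDl mulr_ge0.
have X0 : 0 <= X by exact: powR_ge0.
split=> [|tau0E]; apply: (le_trans loss_le).
  rewrite -[leRHS]mulrA ler_pM2l //; apply: loss_bound_le_general; rewrite ?ler0n //.
    by rewrite lerDr divr_ge0 ?ltW.
  exact: lt_le_trans ltr01 tau1.
rewrite -2![leRHS]mulrA ler_pM2l // [leRHS]mulrA tau0E /Tr div_root //.
by apply: loss_bound_le_tuned; rewrite ?ler0n ?root_ge1.
Qed.
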